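(* Let $G$ be a group and $f:G\to\mathbb N$ a subadditive function ($f(xy)\le f(x)+f(y)$) with $f(x)=0$ iff $x=\mathrm{id}$. Let $T=\{t\in G: f(t)=1\}$. Then the poset $(G,\le_f)$ is $f$-graded, meaning that whenever $y$ covers $x$ in $(G,\le_f)$ we have $f(y)=f(x)+1$, if and only if $T$ generates $G$ and $f=\ell_T$, where $\ell_T(x)$ is the minimum $k$ such that $x$ is a product of $k$ elements of $T$.
   Context: $x\le_f y$ means $f(x)+f(x^{-1}y)=f(y)$; this is a partial order on $G$. *)

From Stdlib Require Import List Arith.
Import ListNotations.

Record Group := {
  carrier :> Type;
  gmul : carrier -> carrier -> carrier;
  gone : carrier;
  ginv : carrier -> carrier;
  gmulA : forall x y z, gmul x (gmul y z) = gmul (gmul x y) z;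
  gmul1 : forall x, gmul gone x = x;
  gmulV : forall x, gmul (ginv x) x = gone
}.

Section Defs.
Variable G : Group.

Definition gprod (s : list G) : G := fold_right (gmul G) (gone G) s.

Definition subadditive (f : G -> nat) : Prop :=
  forall x y, f (gmul G x y) <= f x + f y.

Definition le_f (f : G -> nat) (x y : G) : Prop :=
  f x + f (gmul G (ginv G x) y) = f y.

Definition lt_f (f : G -> nat) (x y : G) : Prop := le_f f x y /\ x <> y.

Definition covers_f (f : G -> nat) (x y : G) : Prop :=
  lt_f f x y /\ ~ (exists z, lt_f f x z /\ lt_f f z y).

Definition f_graded (f : G -> nat) : Prop :=
  forall x y, covers_f f x y -> f y = f x + 1.

Definition generates (T : G -> Prop) : Prop :=
  forall x, exists s : list G,
    (forall a, In a s -> T a \/ T (ginv G a)) /\ x = gprod s.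

Definition prod_of_T (T : G -> Prop) (x : G) (k : nat) : Prop :=
  exists s : list G, length s = k /\ (forall a, In a s -> T a) /\ x = gprod s.

Definition is_ellT (T : G -> Prop) (x : G) (k : nat) : Prop :=
  prod_of_T T x k /\ forall k', prod_of_T T x k' -> k <= k'.

End Defs.

From Stdlib Require Import List Arith Lia Classical.
Import ListNotations.

(* Write 1 for the identity and T = f^{-1}(1).  Subadditivity makes <=_f
   transitive, and f is strictly increasing along <_f (since f vanishes only
   at 1).  Two general facts drive the theorem:
   - (splitting) if x <=_f y and x^{-1}y = ab with f(ab) = f(a) + f(b), then
     x <=_f xa <=_f y;
   - (atoms) since f takes values in N, every x <> 1 lies above some element
     covering 1; in an f-graded poset such an atom has f = 1, i.e. lies in T.
   If (G,<=_f) is f-graded, peeling off atoms shows by induction on f(x) that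
   x is a product of f(x) elements of T; as f(t_1...t_k) <= k always holds,
   f = ell_T and T generates G.  Conversely, if f = ell_T and y covers x, a
   minimal T-word for x^{-1}y of length >= 2 would, by splitting, produce an
   element strictly between x and y; hence f(x^{-1}y) = 1. *)

Section GroupFacts.
Variable G : Group.
Local Notation "x * y" := (gmul G x y).
Local Notation "x ^-1" := (ginv G x) (at level 2, format "x ^-1").

Lemma mulVK (a u : G) : a^-1 * (a * u) = u.
Proof. rewrite gmulA, gmulV, gmul1. reflexivity. Qed.

Lemma solve_left (a u v : G) : a * u = v -> u = a^-1 * v.
Proof. intros <-. symmetry. apply mulVK. Qed.

Lemma mulrV (x : G) : x * x^-1 = gone G.
Proof.
  rewrite <- (gmul1 G (x * x^-1)), <- (gmulV G (x^-1)) at 1.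
  rewrite <- gmulA, (gmulA G (x^-1)), gmulV, gmul1. apply gmulV.
Qed.

Lemma mulKV (x y : G) : x * (x^-1 * y) = y.
Proof. rewrite gmulA, mulrV, gmul1. reflexivity. Qed.

Lemma mulr1 (x : G) : x * gone G = x.
Proof. rewrite <- (gmulV G x), gmulA, mulrV. apply gmul1. Qed.

Lemma inv_one : (gone G)^-1 = gone G.
Proof. rewrite <- (mulr1 ((gone G)^-1)). apply gmulV. Qed.

Lemma eq_of_divl_one (x y : G) : x^-1 * y = gone G -> x = y.
Proof. intros E. rewrite <- (mulKV x y), E. symmetry. apply mulr1. Qed.

End GroupFacts.

Section LengthOrder.
Variable G : Group.
Local Notation "x * y" := (gmul G x y).
Local Notation "x ^-1" := (ginv G x) (at level 2, format "x ^-1").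

Variable f : G -> nat.
Hypothesis hsub : subadditive G f.
Hypothesis hzero : forall x : G, f x = 0 <-> x = gone G.

Local Notation T := (fun t : G => f t = 1).

Lemma f_one : f (gone G) = 0.
Proof. apply hzero. reflexivity. Qed.

Lemma f_pos (x : G) : x <> gone G -> 0 < f x.
Proof. intros Hx. destruct (f x) eqn:E; [apply hzero in E; contradiction | lia]. Qed.

Lemma f_gprod_le (s : list G) : (forall a, In a s -> T a) -> f (gprod G s) <= length s.
Proof.
  induction s as [|a s IH]; intros Hs; simpl.
  - rewrite f_one. lia.
  - pose proof (hsub a (gprod G s)) as Hab.
    rewrite (Hs a (or_introl eq_refl)) in Hab.
    assert (f (gprod G s) <= length s) by (apply IH; intros; apply Hs; right; auto).
    lia.
Qed.

Lemma le_f_refl (x : G) : le_f G f x x.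
Proof. unfold le_f. rewrite gmulV, f_one. lia. Qed.

Lemma le_f_one (x : G) : le_f G f (gone G) x.
Proof. unfold le_f. rewrite inv_one, gmul1, f_one. reflexivity. Qed.

Lemma le_f_trans (x y z : G) : le_f G f x y -> le_f G f y z -> le_f G f x z.
Proof.
  unfold le_f; intros Hxy Hyz.
  assert (E : x^-1 * z = (x^-1 * y) * (y^-1 * z)).
  { symmetry. apply solve_left. rewrite gmulA, mulKV. apply mulKV. }
  pose proof (hsub (x^-1 * y) (y^-1 * z)) as H1. rewrite <- E in H1.
  pose proof (hsub x (x^-1 * z)) as H2. rewrite mulKV in H2. lia.
Qed.

Lemma lt_f_increasing (x y : G) : lt_f G f x y -> f x < f y.
Proof.
  intros [Hle Hne]. unfold le_f in Hle.
  assert (x^-1 * y <> gone G) by (intros E; apply Hne, eq_of_divl_one, E).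
  pose proof (f_pos _ H). lia.
Qed.

Lemma le_f_split (x y a b : G) :
  le_f G f x y -> x^-1 * y = a * b -> f (a * b) = f a + f b ->
  le_f G f x (x * a) /\ le_f G f (x * a) y.
Proof.
  unfold le_f; intros Hxy Hdiv Hadd.
  assert (Hb : (x * a)^-1 * y = b).
  { symmetry. apply solve_left. rewrite <- gmulA, <- Hdiv. apply mulKV. }
  pose proof (hsub x a) as H1.
  pose proof (hsub (x * a) b) as H2.
  rewrite <- Hb, mulKV in H2. rewrite Hb in H2 |- *.
  rewrite mulVK. rewrite Hdiv in Hxy. lia.
Qed.

Lemma atom_below (x : G) : x <> gone G -> exists c, covers_f G f (gone G) c /\ le_f G f c x.
Proof.
  induction x as [x IH] using (well_founded_induction (Wf_nat.well_founded_ltof G f)).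
  intros Hx.
  destruct (classic (exists w, lt_f G f (gone G) w /\ lt_f G f w x)) as [[w [H1w Hwx]]|Hnone].
  - destruct (IH w (lt_f_increasing _ _ Hwx) (not_eq_sym (proj2 H1w))) as [c [Hc Hcw]].
    exists c. split; [exact Hc | exact (le_f_trans _ _ _ Hcw (proj1 Hwx))].
  - exists x. split; [|apply le_f_refl].
    split; [split; [apply le_f_one | apply not_eq_sym, Hx] | exact Hnone].
Qed.

Lemma graded_factorization : f_graded G f -> forall x, prod_of_T G T x (f x).
Proof.
  intros Hgr x.
  induction x as [x IH] using (well_founded_induction (Wf_nat.well_founded_ltof G f)).
  destruct (classic (x = gone G)) as [->|Hx].
  - exists []. rewrite f_one. repeat split. contradiction.
  - destruct (atom_below x Hx) as [c [Hcov Hcx]].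
    assert (fc : f c = 1) by (rewrite (Hgr _ _ Hcov), f_one; reflexivity).
    unfold le_f in Hcx.
    destruct (IH (c^-1 * x) ltac:(unfold Wf_nat.ltof; lia)) as [s [Hlen [Hs Hprod]]].
    exists (c :: s). repeat split.
    + simpl. lia.
    + intros a [<-|Ha]; auto.
    + simpl. fold (gprod G s). rewrite <- Hprod. symmetry. apply mulKV.
Qed.

Lemma ellT_of_factorization (x : G) : prod_of_T G T x (f x) -> is_ellT G T x (f x).
Proof.
  intros Hx. split; [exact Hx|].
  intros k [s [<- [Hs ->]]]. apply f_gprod_le, Hs.
Qed.

(* If f = ell_T, then every cover raises f by exactly 1: a shortest T-word
   of length >= 2 for x^{-1}y would split the interval [x, y]. *)
Lemma ellT_graded : (forall x, is_ellT G T x (f x)) -> f_graded G f.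
Proof.
  intros Hell x y [[Hxy Hne] Hnc].
  pose proof Hxy as Hfy. unfold le_f in Hfy.
  assert (Hz : x^-1 * y <> gone G) by (intros E; apply Hne, eq_of_divl_one, E).
  pose proof (f_pos _ Hz) as Hfz.
  destruct (proj1 (Hell (x^-1 * y))) as [[|t [|t2 r]] [Hlen [Hs Hprod]]];
    simpl in Hlen; [lia | lia |].
  exfalso. apply Hnc.
  remember (gprod G (t2 :: r)) as b eqn:Hbdef.
  assert (ft : f t = 1) by (apply Hs; left; reflexivity).
  assert (Hzb : x^-1 * y = t * b) by (rewrite Hprod, Hbdef; reflexivity).
  assert (Hb : f b <= length (t2 :: r))
    by (rewrite Hbdef; apply f_gprod_le; intros; apply Hs; right; auto).
  simpl in Hb.
  assert (Hadd : f (t * b) = f t + f b)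
    by (pose proof (hsub t b); rewrite <- Hzb in *; lia).
  destruct (le_f_split x y t b Hxy Hzb Hadd) as [Hl Hr].
  assert (Hbne : b <> gone G)
    by (intros E; rewrite <- Hzb, E, f_one in Hadd; lia).
  exists (x * t). split; split; auto.
  - intros E. unfold le_f in Hl. rewrite mulVK, <- E in Hl. lia.
  - intros E. apply Hbne, hzero. unfold le_f in Hl.
    rewrite mulVK, E in Hl. rewrite <- Hzb in Hadd. lia.
Qed.

End LengthOrder.

Theorem mainTheorem4 (G : Group) (f : G -> nat)
  (hsub : subadditive G f)
  (hzero : forall x : G, f x = 0 <-> x = gone G) :
  f_graded G f <->
  (generates G (fun t => f t = 1) /\
   forall x : G, is_ellT G (fun t => f t = 1) x (f x)).
Proof.
  split.
  - intros Hgr.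
    pose proof (graded_factorization G f hsub hzero Hgr) as Hfact.
    split.
    + intros x. destruct (Hfact x) as [s [_ [Hs Hx]]].
      exists s. split; [intros a Ha; left; apply Hs, Ha | exact Hx].
    + intros x. apply ellT_of_factorization; [exact hsub | exact hzero | apply Hfact].
  - intros [_ Hell]. exact (ellT_graded G f hsub hzero Hell).
Qed.
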